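(* Let $0<p\leq 1$, let $A\in\mathbb{R}^{m\times N}$ with $N=nd$, and let $x\in\mathbb{R}^N$ be block $k$-sparse with block support $T_0$, and $y=Ax$. Let $\tilde T\subset\{1,\dots,n\}$ be an arbitrary set, and define $\rho,\alpha\geq 0$ by $|\tilde T|=\rho k$ and $|\tilde T\cap T_0|=\alpha\rho k$. Let $0\leq\omega\leq 1$ and set $\gamma=\omega+(1-\omega)(1+\rho-2\alpha\rho)^{1-p/2}$. Suppose there exists an integer $a$ with $a\geq(1-\alpha)\rho$ and $a>1$ such that $$\delta_{ak}+\frac{a^{1-p/2}}{\gamma}\delta_{(a+1)k}<\frac{a^{1-p/2}}{\gamma}-1 .$$ Then $x$ is the unique solution of $$\min_{z\in\mathbb{R}^N}\sum_{i=1}^n w_i\lVert z[i]\rVert_2^p\quad\text{subject to}\quad Az=y,\qquad w_i=\begin{cases}\omega,& i\in\tilde T\\ 1,& i\in\tilde T^c.\end{cases}$$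
   Context: Vectors $x\in\mathbb{R}^N$, $N=nd$, are split into $n$ consecutive blocks of length $d$: $x[i]=(x_{(i-1)d+1},\dots,x_{id})^T$, $i=1,\dots,n$. A vector is block $k$-sparse if at most $k$ blocks $x[i]$ are nonzero; its block support is the set of indices $i$ with $x[i]\neq 0$. For $v\in\mathbb{R}^m$, $\lVert v\rVert_p^p=\sum_{i=1}^m|v_i|^p$. The block $p$-restricted isometry constant $\delta_k$ of $A$ (of order $k$) is the smallest positive number such that $(1-\delta_k)\lVert z\rVert_2^p\leq\lVert Az\rVert_p^p\leq(1+\delta_k)\lVert z\rVert_2^p$ for all block $k$-sparse $z\in\mathbb{R}^N$. *)

From HB Require Import structures.
From mathcomp Require Import all_boot all_order all_algebra.
From mathcomp Require Import classical_sets reals exp.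
Set Implicit Arguments. Unset Strict Implicit. Unset Printing Implicit Defensive.
Import Order.TTheory GRing.Theory Num.Theory.
Local Open Scope ring_scope.
Local Open Scope classical_set_scope.

Section BlockDefs.
Variable R : realType.

Lemma blk_idx_proof (n d : nat) (i : 'I_n) (j : 'I_d) : (i * d + j < n * d)%N.
Proof.
case: i => i /= Hi; case: j => j /= Hj.
apply: (@leq_trans (i * d + d)); first by rewrite ltn_add2l.
by rewrite -mulSnr leq_mul2r Hi orbT.
Qed.

Definition blk_idx (n d : nat) (i : 'I_n) (j : 'I_d) : 'I_(n * d) :=
  Ordinal (blk_idx_proof i j).

Definition blk (n d : nat) (x : 'cV[R]_(n * d)) (i : 'I_n) : 'rV[R]_d :=
  \row_(j < d) x (blk_idx i j) 0.

Definition l2normr (d : nat) (v : 'rV[R]_d) : R := Num.sqrt (\sum_j v 0 j ^+ 2).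
Definition l2normc (N : nat) (v : 'cV[R]_N) : R := Num.sqrt (\sum_i v i 0 ^+ 2).

Definition pnormp (m : nat) (p : R) (v : 'cV[R]_m) : R := \sum_i powR `|v i 0| p.

Definition block_support (n d : nat) (x : 'cV[R]_(n * d)) : {set 'I_n} :=
  [set i | blk x i != 0].

Definition block_sparse (n d : nat) (k : nat) (x : 'cV[R]_(n * d)) : Prop :=
  (#|block_support x| <= k)%N.

Definition block_pRIC (m n d : nat) (p : R) (A : 'M[R]_(m, n * d)) (s : nat) : R :=
  inf [set delta : R | 0 < delta /\
        forall z : 'cV[R]_(n * d), block_sparse s z ->
          (1 - delta) * powR (l2normc z) p <= pnormp p (A *m z) /\
          pnormp p (A *m z) <= (1 + delta) * powR (l2normc z) p].

Definition wobj (n d : nat) (p : R) (w : 'I_n -> R) (z : 'cV[R]_(n * d)) : R :=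
  \sum_i w i * powR (l2normr (blk z i)) p.

End BlockDefs.

From HB Require Import structures.
From mathcomp Require Import all_boot all_order all_algebra.
From mathcomp Require Import classical_sets reals exp.
From mathcomp Require Import ring lra zify.
Import Order.TTheory GRing.Theory Num.Theory.
Local Open Scope ring_scope.

Set Implicit Arguments. Unset Strict Implicit. Unset Printing Implicit Defensive.

(* Let h = z - x and T0 the block support of x.  If z does not beat x for the
   weighted objective, blockwise p-subadditivity of the norm puts h in a cone:
   the l2/lp mass of h off T0 is at most omega times its mass on T0 plus
   (1 - omega) times its mass on the mismatch set (T0 \ Tt) u (Tt \ T0), which
   has at most (1 + rho - 2 alpha rho) k blocks.  Sorting the blocks of h off T0
   by decreasing norm into chunks of K = a k blocks, Hoelder bounds the cone by
   gamma k^(1-p/2) ||h_T01||_2^p, where T01 is T0 together with the first chunk.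
   Conversely A h = 0 writes A h_T01 as minus the sum of the A h over the later
   chunks, each dominated by the mean over the previous chunk, so the RIP gives
   (1 - delta_(a+1)k) ||h_T01||_2^p <= (1 + delta_ak) K^(p/2-1) (mass off T0).
   Together, 1 - delta_(a+1)k <= gamma a^(p/2-1) (1 + delta_ak), contradicting
   the hypothesis, unless h_T01 = 0, which through the cone forces h = 0. *)

Section PowerInequalities.
Variable R : realType.
Implicit Types a b p q u : R.

Lemma ler_wpowR2r p a b : 0 <= p -> 0 <= a -> a <= b -> a `^ p <= b `^ p.
Proof.
by move=> p0 a0 ab; apply: ge0_ler_powR; rewrite ?nnegrE //; apply: le_trans ab.
Qed.

Lemma powR_sqr_half p a : 0 <= a -> (a ^+ 2) `^ (p / 2) = a `^ p.
Proof.
move=> a0; rewrite -powR_mulrn // -powRrM; congr powR.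
by rewrite mulrC -mulrA mulVf ?mulr1 // pnatr_eq0.
Qed.

(* Concavity: [t <= t `^ p] on [0, 1] applied to [a / (a + b)] and [b / (a + b)]. *)
Lemma powRD_le p a b : 0 < p -> p <= 1 -> 0 <= a -> 0 <= b ->
  (a + b) `^ p <= a `^ p + b `^ p.
Proof.
move=> p0 p1 a0 b0; have [->|s_neq0] := eqVneq (a + b) 0.
  by rewrite powR0 ?gt_eqF // addr_ge0 ?powR_ge0.
have s_gt0 : 0 < a + b by rewrite lt_neqAle eq_sym s_neq0 addr_ge0.
have le_frac c : 0 <= c <= a + b -> c / (a + b) <= (c / (a + b)) `^ p.
  case/andP=> c0 cs; have [->|c_neq0] := eqVneq c 0; first by rewrite mul0r powR_ge0.
  apply: ger1_powR => //; rewrite ler_pdivrMr // mul1r cs andbT.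
  by rewrite divr_gt0 // lt_neqAle eq_sym c_neq0.
have scale c : 0 <= c -> c `^ p = (a + b) `^ p * (c / (a + b)) `^ p.
  by move=> c0; rewrite -powRM ?divr_ge0 ?(ltW s_gt0) // mulrC divfK.
rewrite (scale a) // (scale b) // -mulrDr -{1}[(a + b) `^ p]mulr1.
rewrite ler_wpM2l ?powR_ge0 //; apply: le_trans (lerD (le_frac a _) (le_frac b _)).
- by rewrite -mulrDl divff.
- by rewrite a0 lerDl.
- by rewrite b0 lerDr.
Qed.

Lemma powR_norm_sum_le p (I : Type) (r : seq I) (P : pred I) (c : I -> R) :
  0 < p -> p <= 1 ->
  `|\sum_(i <- r | P i) c i| `^ p <= \sum_(i <- r | P i) `|c i| `^ p.
Proof.
move=> p0 p1; apply: (big_rec2 (fun s t => `|s| `^ p <= t)).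
  by rewrite normr0 powR0 ?gt_eqF.
move=> i s t _ IH; apply: le_trans (ler_wpowR2r (ltW p0) _ (ler_normD _ _)) _ => //.
by apply: le_trans (powRD_le _ _ _ _) _; rewrite ?lerD2l.
Qed.

(* Young's inequality [conjugate_powR] with exponents [1/q] and [1/(1-q)]. *)
Lemma powR_le_tangent1 q u : 0 < q -> q < 1 -> 0 <= u -> u `^ q <= q * u + (1 - q).
Proof.
move=> q0 q1 u0.
have := @conjugate_powR R (u `^ q) 1 q^-1 (1 - q)^-1 (powR_ge0 _ _) ler01.
rewrite invr_gt0 q0 invr_gt0 subr_gt0 q1 !invrK addrC subrK => /(_ isT isT erefl).
by rewrite mulr1 -powRrM mulfV ?gt_eqF // powRr1 // powR1 mul1r mulrC.
Qed.

Lemma sum_powR_le_card q (I : finType) (S : {pred I}) (g : I -> R) :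
  0 < q -> q < 1 -> (forall i, 0 <= g i) ->
  \sum_(i in S) g i `^ q <= #|S|%:R `^ (1 - q) * (\sum_(i in S) g i) `^ q.
Proof.
move=> q0 q1 g0; set s := \sum_(i in S) g i.
have [s0|s_neq0] := eqVneq s 0.
  rewrite big1 ?mulr_ge0 ?powR_ge0 // => i iS.
  by rewrite (psumr_eq0P (fun i _ => g0 i) s0 iS) powR0 ?gt_eqF.
have s_gt0 : 0 < s by rewrite lt_neqAle eq_sym s_neq0 sumr_ge0.
have c_gt0 : (0 : R) < #|S|%:R.
  rewrite ltr0n lt0n; apply: contra s_neq0 => /eqP/card0_eq S0.
  by rewrite /s big_pred0.
set c := (#|S|%:R : R); set M := s / c.
have M_gt0 : 0 < M by rewrite divr_gt0.
have below_tangent i : g i `^ q <= M `^ q * (q * (g i / M) + (1 - q)).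
  rewrite -{1}[g i](divfK (lt0r_neq0 M_gt0)) mulrC powRM ?divr_ge0 ?(ltW M_gt0) ?(ltW s_gt0) //.
  by rewrite ler_wpM2l ?powR_ge0 // powR_le_tangent1 // divr_ge0 // ltW.
apply: le_trans (ler_sum _ (fun i _ => below_tangent i)) _.
rewrite -mulr_sumr big_split /= -mulr_sumr -mulr_suml sumr_const -/s -/c.
have -> : q * (s / M) + (1 - q) *+ #|S| = c.
  by rewrite /M invf_div [s * _]mulrC divfK ?gt_eqF // -mulr_natr -/c; ring.
rewrite /M powRM ?invr_ge0 ?(ltW c_gt0) ?(ltW s_gt0) // -powR_inv1 ?(ltW c_gt0) // -powRrM.
rewrite -mulrA; suff -> : c `^ (-1 * q) * c = c `^ (1 - q) by rewrite mulrC.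
rewrite -[X in _ * X](powRr1 (ltW c_gt0)) -powRD ?(gt_eqF c_gt0) ?implybT //.
by congr powR; ring.
Qed.

Lemma ler_sum_card (I : finType) (X Y : {set I}) (g : I -> R) :
  (forall i, 0 <= g i) -> (#|X| <= #|Y|)%N ->
  (forall x y, x \in X -> y \in Y -> g x <= g y) ->
  \sum_(i in X) g i <= \sum_(i in Y) g i.
Proof.
move=> g0 XY gXY; have [Y0|Y_gt0] := posnP #|Y|.
  have /eqP/cards0_eq -> : #|X| == 0%N by rewrite -leqn0 -Y0.
  by rewrite big_set0 sumr_ge0.
rewrite -(ler_pM2l (_ : (0 : R) < #|Y|%:R)) ?ltr0n //.
apply: (@le_trans _ _ (#|X|%:R * \sum_(i in Y) g i)); last first.
  by rewrite ler_wpM2r ?ler_nat ?sumr_ge0.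
rewrite !mulr_sumr.
rewrite (eq_bigr (fun i => \sum_(j in Y) g i)) => [|i _]; last by rewrite sumr_const mulr_natl.
rewrite [X in _ <= X](eq_bigr (fun j => \sum_(i in X) g j)) => [|j _]; last first.
  by rewrite sumr_const mulr_natl.
by rewrite [X in _ <= X]exchange_big /=; apply: ler_sum => i iX; apply: ler_sum => j jY; apply: gXY.
Qed.

End PowerInequalities.

Section EuclideanNorm.
Variables (R : realType) (d : nat).
Implicit Types u v : 'rV[R]_d.

Lemma l2normr_sqr v : l2normr v ^+ 2 = \sum_j v 0 j ^+ 2.
Proof. by rewrite sqr_sqrtr // sumr_ge0 // => j _; rewrite sqr_ge0. Qed.

Lemma l2normr0 : l2normr (0 : 'rV[R]_d) = 0.
Proof. by rewrite /l2normr big1 ?sqrtr0 // => j _; rewrite mxE expr0n. Qed.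

Lemma l2normrN v : l2normr (- v) = l2normr v.
Proof. by rewrite /l2normr; congr Num.sqrt; apply: eq_bigr => j _; rewrite mxE sqrrN. Qed.

Lemma l2normr_eq0 v : l2normr v = 0 -> v = 0.
Proof.
move=> v0; have : \sum_j v 0 j ^+ 2 = 0 by rewrite -l2normr_sqr v0 expr0n.
move/(psumr_eq0P (fun j _ => sqr_ge0 (v 0 j))) => vj0.
by apply/rowP => j; rewrite mxE; apply/eqP; rewrite -sqrf_eq0 vj0.
Qed.

Lemma cauchy_schwarz u v : \sum_j u 0 j * v 0 j <= l2normr u * l2normr v.
Proof.
set r := l2normr u; set s := l2normr v; set C := \sum_j _.
have [rs0|rs_neq0] := eqVneq (r * s) 0.
  suff -> : C = 0 by rewrite rs0.
  have /orP[/eqP/l2normr_eq0 u0|/eqP/l2normr_eq0 v0] : (r == 0) || (s == 0).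
    by rewrite -mulf_eq0 rs0.
  - by rewrite /C big1 // => j _; rewrite u0 mxE mul0r.
  - by rewrite /C big1 // => j _; rewrite v0 mxE mulr0.
have rs_gt0 : 0 < r * s by rewrite lt_neqAle eq_sym rs_neq0 mulr_ge0 ?sqrtr_ge0.
have : 0 <= \sum_j (s * u 0 j - r * v 0 j) ^+ 2 by rewrite sumr_ge0 // => j _; rewrite sqr_ge0.
have -> : \sum_j (s * u 0 j - r * v 0 j) ^+ 2 = 2 * (r * s) * (r * s - C).
  rewrite (eq_bigr (fun j => s ^+ 2 * u 0 j ^+ 2 + r ^+ 2 * v 0 j ^+ 2
                            - 2 * (r * s) * (u 0 j * v 0 j))); last by move=> j _; ring.
  by rewrite sumrB big_split /= -!mulr_sumr -!l2normr_sqr -/r -/s -/C; ring.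
by rewrite pmulr_rge0 ?subr_ge0 // mulr_gt0.
Qed.

Lemma ler_l2normrD u v : l2normr (u + v) <= l2normr u + l2normr v.
Proof.
rewrite -(ler_pXn2r (_ : (0 < 2)%N)) ?nnegrE ?addr_ge0 ?sqrtr_ge0 //.
have -> : l2normr (u + v) ^+ 2 =
    l2normr u ^+ 2 + l2normr v ^+ 2 + 2 * \sum_j u 0 j * v 0 j.
  rewrite !l2normr_sqr mulr_sumr -!big_split /=.
  by apply: eq_bigr => j _; rewrite mxE; ring.
have := cauchy_schwarz u v; nra.
Qed.

End EuclideanNorm.

Section Blocks.
Variables (R : realType) (n d : nat).
Implicit Types (h x z : 'cV[R]_(n * d)) (S : {set 'I_n}).

Lemma blk_of_proof (t : 'I_(n * d)) : (t %/ d < n)%N.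
Proof. by case: t => t /=; case: d => [|d'] t_lt; [rewrite muln0 in t_lt | rewrite ltn_divLR]. Qed.

Definition blk_of (t : 'I_(n * d)) : 'I_n := Ordinal (blk_of_proof t).

Lemma blk_of_idx (i : 'I_n) (j : 'I_d) : blk_of (blk_idx i j) = i.
Proof.
apply: val_inj => /=; case: j => j /= j_lt.
by rewrite divnMDl ?divn_small ?addn0 //; apply: leq_ltn_trans j_lt.
Qed.

Lemma sum_blocks (F : 'I_(n * d) -> R) :
  \sum_t F t = \sum_(i < n) \sum_(j < d) F (blk_idx i j).
Proof.
rewrite pair_bigA /=; have idx_inj : injective (fun ij : 'I_n * 'I_d => blk_idx ij.1 ij.2).
  move=> [i j] [i' j'] /= eq_idx; have eq_i : i = i' by rewrite -(blk_of_idx i j) eq_idx blk_of_idx.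
  by move: eq_idx => /(congr1 val) /=; rewrite eq_i => /addnI/val_inj ->.
have idx_bij : bijective (fun ij : 'I_n * 'I_d => blk_idx ij.1 ij.2).
  by apply: inj_card_bij idx_inj _; rewrite card_prod !card_ord.
by rewrite (reindex _ (onW_bij _ idx_bij)).
Qed.

Lemma blkB x z i : blk (z - x) i = blk z i - blk x i.
Proof. by apply/rowP => j; rewrite !mxE. Qed.

Definition blk_norm h i : R := l2normr (blk h i).

Definition mixnorm (p : R) S h : R := \sum_(i in S) blk_norm h i `^ p.

Definition sqnorm S h : R := \sum_(i in S) blk_norm h i ^+ 2.

Definition restrict S h : 'cV[R]_(n * d) := \col_t (if blk_of t \in S then h t 0 else 0).

Lemma blk_norm_ge0 h i : 0 <= blk_norm h i.
Proof. exact: sqrtr_ge0. Qed.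

Lemma mixnorm_ge0 p S h : 0 <= mixnorm p S h.
Proof. by apply: sumr_ge0 => i _; apply: powR_ge0. Qed.

Lemma sqnorm_ge0 S h : 0 <= sqnorm S h.
Proof. by apply: sumr_ge0 => i _; apply: sqr_ge0. Qed.

Lemma sum_sqr_blocks h : \sum_t h t 0 ^+ 2 = \sum_i blk_norm h i ^+ 2.
Proof.
rewrite sum_blocks; apply: eq_bigr => i _; rewrite l2normr_sqr.
by apply: eq_bigr => j _; rewrite mxE.
Qed.

Lemma blk_norm_eq0 h : (forall i, blk_norm h i = 0) -> h = 0.
Proof.
move=> h0; have : \sum_t h t 0 ^+ 2 = 0.
  by rewrite sum_sqr_blocks big1 // => i _; rewrite h0 expr0n.
move/(psumr_eq0P (fun t _ => sqr_ge0 (h t 0))) => ht0.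
by apply/colP => t; rewrite mxE; apply/eqP; rewrite -sqrf_eq0 ht0.
Qed.

Lemma blk_restrict S h i : blk (restrict S h) i = if i \in S then blk h i else 0.
Proof. by apply/rowP => j; rewrite !mxE blk_of_idx; case: ifP; rewrite ?mxE. Qed.

Lemma restrict_sparse S h s : (#|S| <= s)%N -> block_sparse s (restrict S h).
Proof.
move=> S_le; apply: leq_trans S_le; apply/subset_leq_card/fintype.subsetP => i.
by rewrite inE blk_restrict; case: ifP; rewrite ?eqxx.
Qed.

Lemma powR_l2normc_restrict p S h :
  l2normc (restrict S h) `^ p = sqnorm S h `^ (p / 2).
Proof.
have -> : l2normc (restrict S h) = Num.sqrt (sqnorm S h).
  rewrite /l2normc sum_sqr_blocks /sqnorm; congr Num.sqrt.
  rewrite [RHS]big_mkcond; apply: eq_bigr => i _.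
  by rewrite /blk_norm blk_restrict; case: ifP; rewrite ?l2normr0 ?expr0n.
by rewrite -powR12_sqrt ?sqnorm_ge0 // -powRrM mulrC.
Qed.

End Blocks.

Section PNorm.
Variables (R : realType) (p : R).
Hypotheses (p_gt0 : 0 < p) (p_le1 : p <= 1).

Lemma pnormp_ge0 k (v : 'cV[R]_k) : 0 <= pnormp p v.
Proof. by apply: sumr_ge0 => i _; apply: powR_ge0. Qed.

Lemma pnormpN k (v : 'cV[R]_k) : pnormp p (- v) = pnormp p v.
Proof. by apply: eq_bigr => i _; rewrite mxE normrN. Qed.

Lemma pnormp_sum_le k (I : finType) (v : I -> 'cV[R]_k) :
  pnormp p (\sum_j v j) <= \sum_j pnormp p (v j).
Proof.
rewrite /pnormp exchange_big /=; apply: ler_sum => i _.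
by rewrite summxE; apply: powR_norm_sum_le.
Qed.

Lemma normr_le_l2normc N (z : 'cV[R]_N) t : `|z t 0| <= l2normc z.
Proof.
rewrite -sqrtr_sqr ler_sqrt; last by rewrite sumr_ge0 // => i _; rewrite sqr_ge0.
by rewrite (bigD1 t) //= lerDl sumr_ge0 // => i _; rewrite sqr_ge0.
Qed.

Lemma pnormp_mul_le m N (A : 'M[R]_(m, N)) (z : 'cV[R]_N) :
  pnormp p (A *m z) <= (\sum_i \sum_j `|A i j| `^ p) * l2normc z `^ p.
Proof.
rewrite /pnormp mulr_suml; apply: ler_sum => i _; rewrite mxE mulr_suml.
apply: le_trans (powR_norm_sum_le _ _ _ p_gt0 p_le1) _; apply: ler_sum => j _.
rewrite normrM powRM // ler_wpM2l ?powR_ge0 //.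
exact: ler_wpowR2r (ltW p_gt0) (normr_ge0 _) (normr_le_l2normc z j).
Qed.

End PNorm.

Section RestrictedIsometry.
Local Open Scope classical_set_scope.
Variables (R : realType) (m n d : nat) (p : R) (A : 'M[R]_(m, n * d)) (s : nat).
Hypotheses (p_gt0 : 0 < p) (p_le1 : p <= 1).

Let ric_set := [set delta : R | 0 < delta /\
  forall z : 'cV[R]_(n * d), block_sparse s z ->
    (1 - delta) * l2normc z `^ p <= pnormp p (A *m z) /\
    pnormp p (A *m z) <= (1 + delta) * l2normc z `^ p].

Let ric_set_lb : lbound ric_set 0.
Proof. by move=> delta [/ltW]. Qed.

(* Any [delta] above the crude bound [pnormp_mul_le] belongs to the set. *)
Let ric_set_nonempty : ric_set !=set0.
Proof.
set M := \sum_i \sum_j `|A i j| `^ p.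
have M_ge0 : 0 <= M by do 2![apply: sumr_ge0 => ? _]; apply: powR_ge0.
exists (2 + M); split=> [|z _]; first by rewrite ltr_wpDr.
split; first by apply: le_trans (pnormp_ge0 _ _); rewrite mulr_le0_ge0 ?powR_ge0 //; lra.
by apply: le_trans (pnormp_mul_le p_gt0 p_le1 A z) _; rewrite ler_wpM2r ?powR_ge0 // -/M; lra.
Qed.

Lemma block_pRIC_ge0 : 0 <= block_pRIC p A s.
Proof. exact: lb_le_inf ric_set_nonempty ric_set_lb. Qed.

Let ric_adherent c e : 0 <= c -> 0 < e ->
  exists2 delta, ric_set delta & delta * c <= block_pRIC p A s * c + e.
Proof.
move=> c0 e0; have ce_gt0 : 0 < e / (c + 1) by rewrite divr_gt0 // ltr_wpDl.
have [|delta ric_delta delta_lt] := @inf_adherent R ric_set _ ce_gt0.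
  by split; [exact: ric_set_nonempty | exists 0; exact: ric_set_lb].
exists delta => //; apply: le_trans (ler_wpM2r c0 (ltW delta_lt)) _.
rewrite mulrDl lerD2l mulrAC ler_pdivrMr ?ltr_wpDl // ler_wpM2l ?(ltW e0) //.
by rewrite lerDl.
Qed.

Lemma block_pRIC_lower z : block_sparse s z ->
  (1 - block_pRIC p A s) * l2normc z `^ p <= pnormp p (A *m z).
Proof.
move=> zs; apply/ler_addgt0Pr => e e0.
have [delta [_ /(_ z zs) [lo _]] delta_le] := ric_adherent (powR_ge0 (l2normc z) p) e0.
by apply: le_trans (lerD lo (lexx e)); rewrite !mulrBl !mul1r; lra.
Qed.

Lemma block_pRIC_upper z : block_sparse s z ->
  pnormp p (A *m z) <= (1 + block_pRIC p A s) * l2normc z `^ p.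
Proof.
move=> zs; apply/ler_addgt0Pr => e e0.
have [delta [_ /(_ z zs) [_ up]] delta_le] := ric_adherent (powR_ge0 (l2normc z) p) e0.
by apply: le_trans up _; rewrite !mulrDl !mul1r; lra.
Qed.

End RestrictedIsometry.

Section Chunks.
Variables (R : realType) (I : finType) (f : I -> R) (U : {set I}) (K : nat).
Hypothesis K_gt0 : (0 < K)%N.

Let ge_f i j := f j <= f i.
Let ranking := sort ge_f (enum U).
Let rank i := index i ranking.

Definition chunk (j : nat) : {set I} := [set i in U | (rank i %/ K == j)%N].

Let ranking_uniq : uniq ranking.
Proof. by rewrite sort_uniq enum_uniq. Qed.

Let mem_ranking i : (i \in ranking) = (i \in U).
Proof. by rewrite mem_sort mem_enum. Qed.

Let rank_lt i : i \in U -> (rank i < #|U|)%N.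
Proof. by rewrite -mem_ranking -index_mem size_sort cardE. Qed.

Lemma chunk_sub j : chunk j \subset U.
Proof. by apply/fintype.subsetP => i; rewrite inE => /andP[]. Qed.

Lemma chunk_card j : (#|chunk j| <= K)%N.
Proof.
pose mod_rank i : 'I_K := Ordinal (ltn_pmod (rank i) K_gt0).
rewrite -(card_in_imset (f := mod_rank)).
  by apply: leq_trans (max_card _) _; rewrite card_ord.
move=> a b; rewrite !inE => /andP[aU /eqP ja] /andP[bU /eqP jb] /(congr1 val) /= eq_mod.
have /(congr1 (nth a ranking)) : rank a = rank b.
  by rewrite (divn_eq (rank a) K) (divn_eq (rank b) K) ja jb eq_mod.
by rewrite !nth_index ?mem_ranking.
Qed.

Lemma chunk_le j j' x y : (j < j')%N -> x \in chunk j' -> y \in chunk j -> f x <= f y.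
Proof.
move=> jj'; rewrite !inE => /andP[xU /eqP jx] /andP[yU /eqP jy].
have rank_yx : (rank y < rank x)%N.
  by rewrite ltnNge; apply: contraL jj' => /(leq_div2r K); rewrite jx jy -leqNgt.
have le_trans_f : transitive ge_f by move=> b a c; rewrite /ge_f => ab bc; apply: le_trans bc ab.
have ranking_sorted : sorted ge_f ranking by apply: sort_sorted => a b; apply: le_total.
have := sorted_ltn_nth le_trans_f x ranking_sorted (rank y) (rank x).
rewrite !inE !index_mem !mem_ranking => /(_ yU xU rank_yx).
by rewrite !nth_index ?mem_ranking.
Qed.

Lemma chunk_full j j' x : (j < j')%N -> x \in chunk j' -> #|chunk j| = K.
Proof.
move=> jj' xj'; apply/eqP; rewrite eqn_leq chunk_card /=.
have xU : x \in U by move: xj'; rewrite inE => /andP[].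
have rank_x : (j' * K <= rank x)%N.
  by move: xj'; rewrite inE => /andP[_ /eqP <-]; rewrite leq_divM.
have lt_size (u : 'I_K) : (j * K + u < size ranking)%N.
  rewrite size_sort -cardE; apply: leq_trans (rank_lt xU); apply: leq_trans rank_x.
  apply: (@leq_trans (j.+1 * K)); first by rewrite mulSnr leq_add2l ltnW.
  by rewrite leq_mul2r jj' orbT.
pose at_rank (u : 'I_K) := nth x ranking (j * K + u).
have at_rank_inj : injective at_rank.
  move=> u v /eqP; rewrite /at_rank nth_uniq ?lt_size ?ranking_uniq // eqn_add2l => /eqP.
  exact: val_inj.
rewrite -{1}[K]card_ord -(card_imset _ at_rank_inj).
apply/subset_leq_card/fintype.subsetP => _ /imsetP [u _ ->].
rewrite inE -mem_ranking mem_nth ?lt_size //= /rank index_uniq ?lt_size ?ranking_uniq //.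
by rewrite divnMDl // divn_small ?addn0.
Qed.

Lemma sum_chunks i (c : R) :
  \sum_(j < #|I|.+1) (if i \in chunk j then c else 0) = if i \in U then c else 0.
Proof.
have [iU|iNU] := boolP (i \in U); last by apply: big1 => j _; rewrite inE (negbTE iNU).
have rank_div_lt : (rank i %/ K < #|I|.+1)%N.
  by apply: leq_ltn_trans (leq_div _ _) _; apply: ltnW (leq_trans (rank_lt iU) (max_card _)).
rewrite -big_mkcond /= (big_pred1 (Ordinal rank_div_lt)) // => j.
by rewrite inE iU /= -val_eqE eq_sym.
Qed.

Lemma sum_over_chunks (g : I -> R) :
  \sum_(j < #|I|.+1) \sum_(i in chunk j) g i = \sum_(i in U) g i.
Proof.
under eq_bigr do rewrite big_mkcond /=.
by rewrite exchange_big [RHS]big_mkcond; apply: eq_bigr => i _; apply: sum_chunks.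
Qed.

Lemma sum_chunk0_max (g : I -> R) (B : {set I}) :
  (forall i, 0 <= g i) -> (forall x y, f x <= f y -> g x <= g y) ->
  B \subset U -> (#|B| <= K)%N ->
  \sum_(i in B) g i <= \sum_(i in chunk 0) g i.
Proof.
move=> g0 g_mono BU BK.
rewrite (big_setID (chunk 0)) [X in _ <= X](big_setID B) /= finset.setIC lerD2l.
have [->|[x]] := set_0Vmem (B :\: chunk 0); first by rewrite big_set0 sumr_ge0.
rewrite finset.in_setD => /andP[xN0 xB]; have xU : x \in U by apply: (fintype.subsetP BU).
have in_later y : y \in U -> y \notin chunk 0 ->
    y \in chunk (rank y %/ K) /\ (0 < rank y %/ K)%N.
  move=> yU yN0; rewrite inE yU eqxx lt0n; split=> //.
  by apply: contra yN0 => /eqP r0; rewrite inE yU r0.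
have [xj j_gt0] := in_later x xU xN0.
apply: ler_sum_card => // [|y z]; last first.
  rewrite !finset.in_setD => /andP[yN0 yB] /andP[zB z0]; apply: g_mono.
  have [yj yj_gt0] := in_later y (fintype.subsetP BU y yB) yN0.
  exact: chunk_le yj_gt0 yj z0.
have := cardsID (chunk 0) B; have := cardsID B (chunk 0).
by rewrite finset.setIC (chunk_full j_gt0 xj); lia.
Qed.

Hypothesis f_ge0 : forall i, 0 <= f i.

(* Every element of [chunk j.+1] is dominated by all [K] elements of [chunk j],
   hence [f i ^ p <= mean of f ^ p over chunk j]. *)
Lemma chunk_succ_le (p : R) j : 0 < p ->
  (\sum_(i in chunk j.+1) f i ^+ 2) `^ (p / 2) <=
    K%:R `^ (p / 2 - 1) * \sum_(i in chunk j) f i `^ p.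
Proof.
move=> p_gt0; set F := \sum_(i in chunk j) f i `^ p.
have K_gt0R : (0 : R) < K%:R by rewrite ltr0n.
have F_ge0 : 0 <= F by apply: sumr_ge0 => i _; apply: powR_ge0.
set c := (F / K%:R) `^ (2 / p).
have le_c x : x \in chunk j.+1 -> f x ^+ 2 <= c.
  move=> xj; have KF : K%:R * f x `^ p <= F.
    rewrite -(chunk_full (ltnSn j) xj) mulr_natl -sumr_const; apply: ler_sum => y yj.
    exact: ler_wpowR2r (ltW p_gt0) (f_ge0 x) (chunk_le (ltnSn j) xj yj).
  have -> : f x ^+ 2 = (f x `^ p) `^ (2 / p).
    by rewrite -powRrM mulrCA divff ?gt_eqF // mulr1 powR_mulrn.
  by apply: ler_wpowR2r; rewrite ?divr_ge0 ?powR_ge0 ?ler_pdivlMr ?(ltW p_gt0) // mulrC.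
have sum_le : \sum_(i in chunk j.+1) f i ^+ 2 <= K%:R * c.
  apply: le_trans (ler_sum _ le_c) _.
  by rewrite sumr_const -[c *+ _]mulr_natl ler_wpM2r ?powR_ge0 // ler_nat chunk_card.
apply: le_trans (ler_wpowR2r _ (sumr_ge0 _ (fun i _ => sqr_ge0 (f i))) sum_le) _.
  by rewrite divr_ge0 // ltW.
have inv_exp : 2 / p * (p / 2) = 1 by field; rewrite ?gt_eqF ?pnatr_eq0.
rewrite powRM ?powR_ge0 ?(ltW K_gt0R) // -powRrM inv_exp powRr1 ?divr_ge0 ?(ltW K_gt0R) //.
by rewrite powRB ?(gt_eqF K_gt0R) ?implybT // powRr1 ?(ltW K_gt0R) // mulrCA mulrC.
Qed.

End Chunks.

Section WeightedCone.
Variables (R : realType) (I : finType) (T0 Tt : {set I}) (omega : R).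

Definition mismatch : {set I} := (T0 :\: Tt) :|: (~: T0 :&: Tt).

Lemma sum_mismatch (F : I -> R) :
  \sum_(i in mismatch) F i = \sum_(i in T0 :\: Tt) F i + \sum_(i in ~: T0 :&: Tt) F i.
Proof.
have disj : [disjoint T0 :\: Tt & ~: T0 :&: Tt].
  by rewrite -setI_eq0; apply/eqP/setP => i; rewrite !inE; case: (i \in T0); case: (i \in Tt).
by rewrite -bigU //; apply: eq_bigl => i; rewrite !inE.
Qed.

Lemma sum_off_support_le (w a b c : I -> R) :
  (forall i, 0 <= w i) -> (forall i, a i <= b i + c i) ->
  (forall i, i \in ~: T0 -> a i = 0 /\ b i = c i) ->
  \sum_(i in ~: T0) w i * c i <=
    \sum_i w i * b i - \sum_i w i * a i + \sum_(i in T0) w i * c i.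
Proof.
move=> w_ge0 abc off_T0; have split_T0 (F : I -> R) :
    \sum_i F i = \sum_(i in T0) F i + \sum_(i in ~: T0) F i.
  by rewrite (bigID (mem T0)) /=; congr (_ + _); apply: eq_bigl => i; rewrite finset.in_setC.
have off_a : \sum_(i in ~: T0) w i * a i = 0.
  by apply: big1 => i /off_T0 [-> _]; rewrite mulr0.
have off_b : \sum_(i in ~: T0) w i * b i = \sum_(i in ~: T0) w i * c i.
  by apply: eq_bigr => i /off_T0 [_ ->].
have on_a : \sum_(i in T0) w i * a i <= \sum_(i in T0) w i * b i + \sum_(i in T0) w i * c i.
  by rewrite -big_split; apply: ler_sum => i _ /=; rewrite -mulrDr ler_wpM2l.
by rewrite !(split_T0 (fun i => w i * _)) off_a off_b; lra.
Qed.

Lemma weighted_cone (a b c : I -> R) :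
  let w i := if i \in Tt then omega else 1 in
  0 <= omega -> (forall i, a i <= b i + c i) ->
  (forall i, i \in ~: T0 -> a i = 0 /\ b i = c i) ->
  \sum_i w i * b i <= \sum_i w i * a i ->
  \sum_(i in ~: T0) c i <= omega * \sum_(i in T0) c i + (1 - omega) * \sum_(i in mismatch) c i.
Proof.
move=> w omega_ge0 abc off_T0 ba.
have w_ge0 i : 0 <= w i by rewrite /w; case: ifP.
have cone : \sum_(i in ~: T0) w i * c i <= \sum_(i in T0) w i * c i.
  by have := sum_off_support_le w_ge0 abc off_T0; lra.
have split_w (S : {set I}) : \sum_(i in S) w i * c i =
    omega * \sum_(i in S :&: Tt) c i + \sum_(i in S :\: Tt) c i.
  rewrite (big_setID Tt) /= mulr_sumr; congr (_ + _); apply: eq_big => // i.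
    by rewrite finset.in_setI /w => /andP[_ ->].
  by rewrite finset.in_setD /w => /andP[/negbTE ->]; rewrite mul1r.
have split_c (S : {set I}) :
    \sum_(i in S) c i = \sum_(i in S :&: Tt) c i + \sum_(i in S :\: Tt) c i.
  exact: big_setID.
by move: cone; rewrite !split_w sum_mismatch (split_c (~: T0)) (split_c T0); lra.
Qed.

Lemma card_mismatch (k : nat) (rho alpha : R) :
  (#|T0| <= k)%N -> #|Tt|%:R = rho * k%:R -> #|Tt :&: T0|%:R = alpha * rho * k%:R ->
  #|mismatch|%:R <= (1 + rho - 2 * alpha * rho) * k%:R /\
  #|~: T0 :&: Tt|%:R = (1 - alpha) * rho * k%:R.
Proof.
move=> T0k cTt cTtT0; have := sum_mismatch (fun=> 1); rewrite !sumr_const => cD.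
have := cardsID Tt T0; rewrite finset.setIC => /(congr1 (fun m => m%:R : R)).
rewrite natrD cTtT0 => cT0.
have := cardsID T0 Tt => /(congr1 (fun m => m%:R : R)).
rewrite natrD cTt cTtT0 finset.setDE finset.setIC => cU.
have : #|T0|%:R <= k%:R :> R by rewrite ler_nat.
by split; lra.
Qed.

End WeightedCone.

Section NullSpaceProperty.
Variables (R : realType) (n d : nat) (p : R).
Hypotheses (p_gt0 : 0 < p) (p_le1 : p <= 1).
Implicit Types (h x z : 'cV[R]_(n * d)) (S Tt : {set 'I_n}).

Definition top_blocks h T0 K : {set 'I_n} := T0 :|: chunk (blk_norm h) (~: T0) K 0.

Lemma blk_norm_powR_le x z i :
  blk_norm x i `^ p <= blk_norm z i `^ p + blk_norm (z - x) i `^ p.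
Proof.
rewrite /blk_norm [blk x i](_ : _ = blk z i + - blk (z - x) i); last first.
  by rewrite blkB opprB addrC subrK.
apply: le_trans (ler_wpowR2r (ltW p_gt0) (sqrtr_ge0 _) (ler_l2normrD _ _)) _.
by rewrite l2normrN; apply: powRD_le; rewrite ?sqrtr_ge0.
Qed.

Lemma mixnorm_cone x z Tt omega :
  let w i := if i \in Tt then omega else 1 in let T0 := block_support x in
  0 <= omega -> wobj p w z <= wobj p w x ->
  mixnorm p (~: T0) (z - x) <=
    omega * mixnorm p T0 (z - x) + (1 - omega) * mixnorm p (mismatch T0 Tt) (z - x).
Proof.
move=> w T0 omega_ge0 zx.
apply: (@weighted_cone _ _ _ _ _ (fun i => blk_norm x i `^ p) (fun i => blk_norm z i `^ p)) => //.
  by move=> i; apply: blk_norm_powR_le.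
move=> i; rewrite !inE negbK => /eqP xi0.
by rewrite /blk_norm blkB xi0 subr0 l2normr0 powR0 ?gt_eqF.
Qed.

Lemma mixnorm_le_sqnorm S h : mixnorm p S h <= #|S|%:R `^ (1 - p / 2) * sqnorm S h `^ (p / 2).
Proof.
have q_gt0 : 0 < p / 2 by rewrite divr_gt0.
have q_lt1 : p / 2 < 1 by rewrite ltr_pdivrMr // mul1r (le_lt_trans p_le1) // ltr1n.
rewrite /mixnorm; under eq_bigr do rewrite -powR_sqr_half ?blk_norm_ge0 //.
by apply: sum_powR_le_card => // i; apply: sqr_ge0.
Qed.

Lemma sqnorm_subset S S' h : S \subset S' -> sqnorm S h <= sqnorm S' h.
Proof.
move=> SS'; rewrite [sqnorm S' h](big_setID S) /= (finset.setIidPr SS') lerDl.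
by apply: sumr_ge0 => i _; apply: sqr_ge0.
Qed.

Lemma sqnorm_top_blocks h T0 K :
  sqnorm (top_blocks h T0 K) h = sqnorm T0 h + sqnorm (chunk (blk_norm h) (~: T0) K 0) h.
Proof.
rewrite /sqnorm -bigU /=; last by rewrite disjoint_sym finset.disjoints_subset chunk_sub.
by apply: eq_bigl => i; rewrite !inE.
Qed.

Lemma sqnorm_mismatch_le h T0 Tt K : (0 < K)%N -> (#|~: T0 :&: Tt| <= K)%N ->
  sqnorm (mismatch T0 Tt) h <= sqnorm (top_blocks h T0 K) h.
Proof.
move=> K_gt0 card_le; rewrite /sqnorm sum_mismatch -!/(sqnorm _ h) sqnorm_top_blocks.
apply: lerD; first by apply: sqnorm_subset; apply: finset.subsetDl.
apply: sum_chunk0_max => //; first by move=> i; apply: sqr_ge0.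
- by move=> i j; rewrite ler_sqr ?nnegrE ?blk_norm_ge0.
- exact: finset.subsetIl.
Qed.

Lemma cone_bound x z Tt omega (k K : nat) (b : R) :
  let w i := if i \in Tt then omega else 1 in let T0 := block_support x in
  0 <= omega -> omega <= 1 -> (0 < k)%N -> (0 < K)%N -> (#|T0| <= k)%N ->
  #|mismatch T0 Tt|%:R <= b * k%:R -> (#|~: T0 :&: Tt| <= K)%N ->
  wobj p w z <= wobj p w x ->
  mixnorm p (~: T0) (z - x) <=
    (omega + (1 - omega) * b `^ (1 - p / 2)) * k%:R `^ (1 - p / 2) *
      sqnorm (top_blocks (z - x) T0 K) (z - x) `^ (p / 2).
Proof.
move=> w T0 om_ge0 om_le1 k_gt0 K_gt0 T0_le D_le U_le obj_le.
set h := z - x; set X := sqnorm _ h; set q := p / 2.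
have q_ge0 : 0 <= q by rewrite divr_ge0 // ltW.
have q1_ge0 : 0 <= 1 - q by rewrite subr_ge0 ler_pdivrMr // mul1r (le_trans p_le1) // ler1n.
have b_ge0 : 0 <= b.
  by rewrite -(pmulr_lge0 _ (_ : 0 < k%:R)) ?ltr0n // (le_trans _ D_le).
have on_T0 : mixnorm p T0 h <= k%:R `^ (1 - q) * X `^ q.
  apply: le_trans (mixnorm_le_sqnorm _ _) _; apply: ler_pM; rewrite ?powR_ge0 //.
    by apply: ler_wpowR2r; rewrite ?ler_nat.
  by apply: ler_wpowR2r; rewrite ?sqnorm_ge0 ?sqnorm_subset ?finset.subsetUl.
have on_D : mixnorm p (mismatch T0 Tt) h <= b `^ (1 - q) * k%:R `^ (1 - q) * X `^ q.
  rewrite -powRM //; apply: le_trans (mixnorm_le_sqnorm _ _) _.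
  apply: ler_pM; rewrite ?powR_ge0 //; first exact: ler_wpowR2r.
  by apply: ler_wpowR2r; rewrite ?sqnorm_ge0 ?sqnorm_mismatch_le.
apply: le_trans (mixnorm_cone om_ge0 obj_le) _.
move: on_T0 on_D; rewrite -/h -/T0.
move: (mixnorm p T0 h) (mixnorm p _ h) (b `^ _) (k%:R `^ _) (X `^ q) => mT0 mD B C P.
have : 0 <= 1 - omega by rewrite subr_ge0.
by nra.
Qed.

Lemma restrict_chunks h T0 K :
  h = restrict (top_blocks h T0 K) h +
      \sum_(j < #|'I_n|) restrict (chunk (blk_norm h) (~: T0) K j.+1) h.
Proof.
apply/colP => t; rewrite !mxE summxE; under eq_bigr do rewrite mxE.
have := sum_chunks (blk_norm h) (~: T0) K (blk_of t) (h t 0).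
rewrite big_ord_recl finset.in_setC /top_blocks finset.in_setU.
case: (boolP (blk_of t \in T0)) => tT0 /= chunks_t; last by rewrite -{1}chunks_t.
rewrite big1 ?addr0 // => j _; case: ifP => // /(fintype.subsetP (chunk_sub _ _ _ _)).
by rewrite finset.in_setC tT0.
Qed.

Lemma top_blocks_eq0 h T0 K :
  sqnorm (top_blocks h T0 K) h = 0 -> mixnorm p (~: T0) h <= 0 -> h = 0.
Proof.
move=> X0 U_le0; apply: blk_norm_eq0 => i; have [iT0|iU] := boolP (i \in T0).
  have : i \in top_blocks h T0 K by rewrite finset.in_setU iT0.
  by move/(psumr_eq0P (fun i _ => sqr_ge0 (blk_norm h i)) X0)/eqP; rewrite sqrf_eq0 => /eqP.
have U0 : mixnorm p (~: T0) h = 0 by apply/eqP; rewrite eq_le U_le0 mixnorm_ge0.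
apply: (@powR_eq0_eq0 _ _ p); apply: (psumr_eq0P _ U0); last by rewrite finset.in_setC.
by move=> j _; apply: powR_ge0.
Qed.

Lemma tail_bound m (A : 'M[R]_(m, n * d)) h (T0 : {set 'I_n}) K s :
  (0 < K)%N -> A *m h = 0 -> (#|T0| + K <= s)%N ->
  (1 - block_pRIC p A s) * sqnorm (top_blocks h T0 K) h `^ (p / 2) <=
    (1 + block_pRIC p A K) * (K%:R `^ (p / 2 - 1) * mixnorm p (~: T0) h).
Proof.
move=> K_gt0 Ah0 T0K_le; set C := chunk (blk_norm h) (~: T0) K.
have A_top : A *m restrict (top_blocks h T0 K) h = - \sum_(j < #|'I_n|) A *m restrict (C j.+1) h.
  by apply/eqP; rewrite -addr_eq0 -mulmx_sumr -mulmxDr -restrict_chunks Ah0.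
have top_sparse : block_sparse s (restrict (top_blocks h T0 K) h).
  apply/restrict_sparse/(leq_trans _ T0K_le); rewrite cardsU.
  by apply: leq_trans (leq_subr _ _) _; rewrite leq_add2l chunk_card.
rewrite -powR_l2normc_restrict; apply: le_trans (block_pRIC_lower A p_gt0 p_le1 top_sparse) _.
rewrite A_top pnormpN; apply: le_trans (pnormp_sum_le p_gt0 p_le1 _) _.
have ric_ge0 : 0 <= 1 + block_pRIC p A K by rewrite addr_ge0 ?block_pRIC_ge0.
apply: (@le_trans _ _ (\sum_(j < #|'I_n|)
    (1 + block_pRIC p A K) * (K%:R `^ (p / 2 - 1) * mixnorm p (C j) h))).
  apply: ler_sum => j _.
  have chunk_sparse : block_sparse K (restrict (C j.+1) h) by apply/restrict_sparse/chunk_card.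
  apply: le_trans (block_pRIC_upper A p_gt0 p_le1 chunk_sparse) _.
  rewrite powR_l2normc_restrict ler_wpM2l //.
  exact: (chunk_succ_le _ K_gt0 (blk_norm_ge0 h) _ p_gt0).
rewrite -mulr_sumr ler_wpM2l // -mulr_sumr ler_wpM2l ?powR_ge0 //.
rewrite /mixnorm -(sum_over_chunks (blk_norm h) (~: T0) K (fun i => blk_norm h i `^ p)).
rewrite big_ord_recr /= lerDl.
by apply: sumr_ge0 => i _; apply: powR_ge0.
Qed.

Lemma ker_ric_bound m (A : 'M[R]_(m, n * d)) h (T0 : {set 'I_n}) (k a : nat) (G : R) :
  (0 < k)%N -> (0 < a)%N -> A *m h = 0 -> h != 0 -> (#|T0| <= k)%N ->
  mixnorm p (~: T0) h <=
    G * k%:R `^ (1 - p / 2) * sqnorm (top_blocks h T0 (a * k)) h `^ (p / 2) ->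
  1 - block_pRIC p A (a.+1 * k) <= G / a%:R `^ (1 - p / 2) * (1 + block_pRIC p A (a * k)).
Proof.
move=> k_gt0 a_gt0 Ah0 h_neq0 T0_le cone.
have K_gt0 : (0 < a * k)%N by rewrite muln_gt0 a_gt0.
have card_le : (#|T0| + a * k <= a.+1 * k)%N by rewrite mulSn leq_add2r.
have tail := tail_bound K_gt0 Ah0 card_le.
set X := sqnorm _ h in cone tail; set t := a%:R `^ (1 - p / 2).
have X_gt0 : 0 < X `^ (p / 2).
  rewrite lt_neqAle powR_ge0 andbT eq_sym; apply: contra h_neq0 => /eqP/powR_eq0_eq0 X0.
  apply/eqP/(top_blocks_eq0 X0); apply: le_trans cone _.
  by rewrite X0 powR0 ?mulr0 // gt_eqF // divr_gt0.
have scale : (a * k)%:R `^ (p / 2 - 1) * k%:R `^ (1 - p / 2) = t^-1.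
  rewrite natrM powRM ?ler0n // -mulrA -powRD ?pnatr_eq0 -?lt0n ?k_gt0 ?implybT //.
  by rewrite -[1 - p / 2]opprB addrN powRr0 mulr1 /t -powRN opprB.
have ric_ge0 : 0 <= 1 + block_pRIC p A (a * k) by rewrite addr_ge0 ?block_pRIC_ge0.
rewrite -(ler_pM2r X_gt0); apply: le_trans tail _.
apply: le_trans (ler_wpM2l ric_ge0 (ler_wpM2l (powR_ge0 _ _) cone)) _.
move: scale; rewrite -/t; move: (1 + _) (_%:R `^ _) (k%:R `^ _) (X `^ _) => r u v P scale.
by rewrite (_ : r * _ = G / t * r * P) // -scale; ring.
Qed.

End NullSpaceProperty.

Lemma ric_gap (R : realType) (d1 d2 g t : R) : 0 <= d1 -> 0 < t -> 0 <= g ->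
  d1 + t / g * d2 < t / g - 1 -> g / t * (1 + d1) < 1 - d2.
Proof.
move=> d1_ge0 t_gt0 g_ge0; have [->|g_neq0] := eqVneq g 0; first by rewrite invr0 !mulr0 mul0r; lra.
have gt_gt0 : 0 < g / t by rewrite divr_gt0 // lt_neqAle eq_sym g_neq0.
have uv : g / t * (t / g) = 1 by rewrite mulrA divfK ?gt_eqF // divff.
move: (g / t) (t / g) uv gt_gt0 => u v uv u_gt0.
rewrite -(ltr_pM2l u_gt0) mulrDr mulrA uv mul1r mulrBr uv mulr1; lra.
Qed.

Theorem corollary1 (R : realType) (p : R) (m n d k : nat)
  (A : 'M[R]_(m, n * d)) (x : 'cV[R]_(n * d))
  (Tt : {set 'I_n}) (rho alpha omega : R) (a : nat) :
  0 < p -> p <= 1 ->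
  (0 < k)%N ->
  block_sparse k x ->
  0 <= rho -> 0 <= alpha ->
  (#|Tt|)%:R = rho * k%:R ->
  (#|Tt :&: block_support x|)%:R = alpha * rho * k%:R ->
  0 <= omega -> omega <= 1 ->
  let gamma := omega + (1 - omega) * powR (1 + rho - 2 * alpha * rho) (1 - p / 2) in
  (1 - alpha) * rho <= a%:R -> (1 < a)%N ->
  block_pRIC p A (a * k) + powR a%:R (1 - p / 2) / gamma * block_pRIC p A (a.+1 * k)
    < powR a%:R (1 - p / 2) / gamma - 1 ->
  let w := fun i : 'I_n => if i \in Tt then omega else 1 in
  forall z : 'cV[R]_(n * d), A *m z = A *m x -> z != x ->
    wobj p w x < wobj p w z.
Proof.
move=> p_gt0 p_le1 k_gt0 x_sparse _ _ card_Tt card_TtT0 om_ge0 om_le1 gamma a_ge a_gt1 ric.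
move=> w z Az_eq z_neq; rewrite ltNge; apply/negP => obj_le.
have K_gt0 : (0 < a * k)%N by rewrite muln_gt0 k_gt0 ltnW.
have [D_le U_card] := card_mismatch x_sparse card_Tt card_TtT0.
have U_le : (#|~: block_support x :&: Tt| <= a * k)%N.
  by rewrite -(ler_nat R) U_card natrM ler_wpM2r.
have cone := cone_bound p_gt0 p_le1 om_ge0 om_le1 k_gt0 K_gt0 x_sparse D_le U_le obj_le.
have Ah0 : A *m (z - x) = 0 by rewrite mulmxBr Az_eq subrr.
have h_neq0 : z - x != 0 by rewrite subr_eq0.
have := ker_ric_bound p_gt0 p_le1 k_gt0 (ltnW a_gt1) Ah0 h_neq0 x_sparse cone.
have gamma_ge0 : 0 <= gamma by rewrite addr_ge0 // mulr_ge0 ?powR_ge0 // subr_ge0.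
have t_gt0 : 0 < a%:R `^ (1 - p / 2) by rewrite powR_gt0 // ltr0n ltnW.
by rewrite leNgt (ric_gap (block_pRIC_ge0 A (a * k) p_gt0 p_le1) t_gt0 gamma_ge0 ric).
Qed.
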